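(* Let $p$ be a prime, let $h_1,h_2$ be relatively prime positive integers, $h=h_1+h_2$, and let $F$ be the 2-dimensional Lubin–Tate formal group over $\mathbb{Z}_p$ associated with $(h_1,h_2)$. Then its multiplication-by-$p$ endomorphism satisfies $$[p]_F(x_1,x_2)\equiv(px_1,px_2)\ \text{mod degree 2 terms}\quad\text{and}\quad [p]_F(x_1,x_2)\equiv\big(x_2^{p^{h_1}},x_1^{p^{h_2}}\big)\ \text{mod } p.$$ In particular $[p]_F$ belongs to the set $\mathcal{C}^{h_1,h_2}_{LT}$ of pairs $f(X)\in\mathbb{Z}_p[[x_1,x_2]]^2$ with $f(X)\equiv(px_1,px_2)$ mod degree 2 and $f(X)$ mod $p$ equal to $(x_1^{p^{h_1}},x_2^{p^{h_2}})$ or $(x_2^{p^{h_1}},x_1^{p^{h_2}})$.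
   Context: Let $L=(L_1,L_2)\in\mathbb{Q}_p[[x_1,x_2]]^2$ be given by $L_1=x_1+\sum_{k\ge1}p^{-2k}x_1^{p^{kh}}+\sum_{k\ge0}p^{-(2k+1)}x_2^{p^{h_1+kh}}$ and $L_2=x_2+\sum_{k\ge1}p^{-2k}x_2^{p^{kh}}+\sum_{k\ge0}p^{-(2k+1)}x_1^{p^{h_2+kh}}$. Its Jacobian at $0$ is the identity, so it has a compositional inverse $L^{-1}$, and the 2-dimensional Lubin–Tate formal group associated with $(h_1,h_2)$ is $F(X,Y)=L^{-1}(L(X)+L(Y))$, a 2-dimensional formal group with coefficients in $\mathbb{Z}_p$. The maps $[k]_F$ are defined by $[0]_F(X)=0$, $[1]_F(X)=X$, $[k]_F(X)=F(X,[k-1]_F(X))$ for $k\ge2$. *)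

From mathcomp Require Import all_boot all_algebra.
From mathcomp Require Export mpoly.

Set Implicit Arguments.
Unset Strict Implicit.
Unset Printing Implicit Defensive.

Import GRing.Theory Num.Theory.
Local Open Scope ring_scope.

(* (All series in the statement have coefficients in Q; membership in *)
(* Z_p of a rational coefficient = p-integrality, see [pint].)         *)
Definition ser (n : nat) := 'X_{1..n} -> rat.

Definition trunc n (d : nat) (f : ser n) : {mpoly rat[n]} :=
  \sum_(m : 'X_{1..n < d.+1}) f m *: 'X_[m].

(* composition f(g_1,...,g_n) of power series, meaningful when all g_i
   have zero constant term: the coefficient of a monomial of degree d
   only depends on the truncations at degree d. *)
Definition scomp n k (f : ser n) (g : 'I_n -> ser k) : ser k :=
  fun m => ((trunc (mdeg m) f) \mPo [tuple trunc (mdeg m) (g i) | i < n])@_m.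

Definition smon n (m0 : 'X_{1..n}) : ser n := fun m => (m == m0)%:R.
Definition svar n (i : 'I_n) : ser n := smon (U_(i))%MM.

Definition sadd n (f g : ser n) : ser n := fun m => f m + g m.

Definition i1 : 'I_2 := ord0.
Definition i2 : 'I_2 := ord_max.

(*  L_a = x_a + sum_{k>=1} p^{-2k} x_a^{p^{kh}}                        *)
(*            + sum_{k>=0} p^{-(2k+1)} x_b^{p^{hi+kh}}                 *)
(* with (a,b,hi) = (1,2,h1) for L_1 and (2,1,h2) for L_2.              *)
(* monomial of degree d is read off from the partial sum with N = d+1  *)
(* (all terms with k >= N have degree > d).                            *)
Definition Lpart (p h1 h2 : nat) (N : nat) (a b : 'I_2) (hi : nat)
  : {mpoly rat[2]} :=
  'X_a
  + \sum_(1 <= k < N) ((p%:R : rat) ^- (2 * k)) *: 'X_a ^+ (p ^ (k * (h1 + h2)))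
  + \sum_(0 <= k < N) ((p%:R : rat) ^- (2 * k).+1) *: 'X_b ^+ (p ^ (hi + k * (h1 + h2))).

Definition Lser (p h1 h2 : nat) (j : 'I_2) : ser 2 :=
  fun m => (if j == i1 then Lpart p h1 h2 (mdeg m).+1 i1 i2 h1
            else Lpart p h1 h2 (mdeg m).+1 i2 i1 h2)@_m.

Definition is_Linv (p h1 h2 : nat) (G : 'I_2 -> ser 2) : Prop :=
  [/\ forall i, G i 0%MM = 0,
      forall i, scomp (Lser p h1 h2 i) G = svar i
    & forall i, scomp (G i) (Lser p h1 h2) = svar i].

(* F(X,Y) = L^{-1}(L(X) + L(Y)), a pair of series in the 4 variables
   (x1, x2, y1, y2) = indices 0,1 (X) and 2,3 (Y). *)
Definition FLT (p h1 h2 : nat) (G : 'I_2 -> ser 2) : 'I_2 -> ser 4 :=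
  fun i => scomp (G i) (fun j =>
    sadd (scomp (Lser p h1 h2 j) (fun t => svar (lshift 2 t)))
         (scomp (Lser p h1 h2 j) (fun t => svar (rshift 2 t)))).

Fixpoint mulF (F : 'I_2 -> ser 4) (k : nat) : 'I_2 -> ser 2 :=
  match k with
  | 0 => fun _ _ => 0
  | k'.+1 =>
    if k' is 0 then fun i => svar i
    else fun i => scomp (F i) (fun t : 'I_(2 + 2) =>
           match split t with
           | inl a => svar a
           | inr b => mulF F k' b
           end)
  end.

(* r lies in Z_p (i.e. in Z_(p) = Q ∩ Z_p) *)
Definition pint (p : nat) (r : rat) : bool := ~~ (p %| `|denq r|)%N.
(* r = s mod p in Z_p:  (r - s)/p in Z_p *)
Definition congp (p : nat) (r s : rat) : bool := pint p ((r - s) / p%:R).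

Definition ser_congp (p : nat) (f g : 'I_2 -> ser 2) : Prop :=
  forall i m, congp p (f i m) (g i m).

Definition lin_p (p : nat) (f : 'I_2 -> ser 2) : Prop :=
  forall i (m : 'X_{1..2}), (mdeg m <= 1)%N -> f i m = p%:R * smon (U_(i))%MM m.

Definition frob_id (p h1 h2 : nat) : 'I_2 -> ser 2 :=
  fun i => if i == i1 then smon (U_(i1) *+ (p ^ h1))%MM
           else smon (U_(i2) *+ (p ^ h2))%MM.
Definition frob_sw (p h1 h2 : nat) : 'I_2 -> ser 2 :=
  fun i => if i == i1 then smon (U_(i2) *+ (p ^ h1))%MM
           else smon (U_(i1) *+ (p ^ h2))%MM.

Definition CLT (p h1 h2 : nat) (f : 'I_2 -> ser 2) : Prop :=
  [/\ forall i m, pint p (f i m),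
      lin_p p f
    & ser_congp p f (frob_id p h1 h2) \/ ser_congp p f (frob_sw p h1 h2)].

From mathcomp Require Import all_boot all_algebra.
From mathcomp Require Import mpoly ring zify.

(** Every series is handled through its truncations: the coefficient of degree [d]
    of a composite only depends on the factors modulo degree [d + 1].
    As [L] is a homomorphism from [F] to the additive group, [L([p] X) = p L(X)];
    since [L = X] modulo degree 2, this gives [[p] X = p X] modulo degree 2.
    Write [L_a = x_a + T_a] and [phi = (x_2^(p^h1), x_1^(p^h2))]. The functional
    equation [p T_a(X) = phi_a + T_a(phi)] of the logarithm then yields
    [[p]_a - phi_a = p x_a + (T_a(phi) - T_a([p]))]. Each term of [T_a] is
    [p^-j Y^(p^e)] with [j <= e], and [Y = Z mod p] implies
    [Y^(p^e) = Z^(p^e) mod p^(e+1)]; so if [[p] = phi mod p] below degree [d],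
    the degree-[d] coefficients of [T_a(phi) - T_a([p])] are divisible by [p], and
    induction on the degree gives [[p] = phi mod p]. *)

Set Implicit Arguments.
Unset Strict Implicit.
Unset Printing Implicit Defensive.

Import GRing.Theory Num.Theory.
Local Open Scope ring_scope.

Section LowDegree.
Variable n : nat.
Implicit Types (P Q R : {mpoly rat[n]}) (m : 'X_{1..n}).

Definition low_part d (c : 'X_{1..n} -> rat) : {mpoly rat[n]} :=
  \sum_(m : 'X_{1..n < d}) c m *: 'X_[m].

Lemma mcoeff_low_part d c m :
  (low_part d c)@_m = if (mdeg m < d)%N then c m else 0.
Proof.
rewrite /low_part raddf_sum /=.
under eq_bigr => m' _ do rewrite mcoeffZ mcoeffX.
case: ltnP => hm.
  rewrite (bigD1 (BMultinom hm)) //= eqxx mulr1 big1 ?addr0 // => m' ne.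
  case: eqP => [e|]; last by rewrite mulr0.
  by move: ne; rewrite bmeqP /= e eqxx.
apply: big1 => m' _; case: eqP => [e|]; last by rewrite mulr0.
by have := bmdeg m'; rewrite e ltnNge hm.
Qed.

Lemma mcoeff_trunc d (f : ser n) m :
  (trunc d f)@_m = if (mdeg m <= d)%N then f m else 0.
Proof. exact: mcoeff_low_part. Qed.

Lemma mdeg_lt1 m : (mdeg m < 1)%N -> m = 0%MM.
Proof. by rewrite ltnS leqn0 mdeg_eq0 => /eqP. Qed.

Definition ord_ge w P := forall m, (mdeg m < w)%N -> P@_m = 0.

Lemma ord_ge0 P : ord_ge 0 P. Proof. by []. Qed.

Lemma ord_ge_zero w : ord_ge w 0. Proof. by move=> m _; rewrite mcoeff0. Qed.

Lemma ord_ge_le v w P : (v <= w)%N -> ord_ge w P -> ord_ge v P.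
Proof. by move=> le_vw hP m hm; apply: hP; apply: leq_trans le_vw. Qed.

Lemma ord_geD w P Q : ord_ge w P -> ord_ge w Q -> ord_ge w (P + Q).
Proof. by move=> hP hQ m hm; rewrite mcoeffD hP ?hQ ?addr0. Qed.

Lemma ord_geN w P : ord_ge w P -> ord_ge w (- P).
Proof. by move=> hP m hm; rewrite mcoeffN hP ?oppr0. Qed.

Lemma ord_geZ w c P : ord_ge w P -> ord_ge w (c *: P).
Proof. by move=> hP m hm; rewrite mcoeffZ hP ?mulr0. Qed.

Lemma ord_ge_sum w (I : Type) (r : seq I) (Pr : pred I) (F : I -> {mpoly rat[n]}) :
  (forall i, Pr i -> ord_ge w (F i)) -> ord_ge w (\sum_(i <- r | Pr i) F i).
Proof. by move=> hF; elim/big_ind: _ => //; [exact: ord_ge_zero | exact: ord_geD]. Qed.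

Lemma ord_geM a b P Q : ord_ge a P -> ord_ge b Q -> ord_ge (a + b) (P * Q).
Proof.
move=> hP hQ m hm; rewrite mcoeffM big1 // => k /eqP e.
have hd := congr1 (@mdeg _) e; rewrite mdegD in hd; rewrite hd in hm.
case: (ltnP (mdeg k.1) a) => hk; first by rewrite hP ?mul0r.
by rewrite hQ ?mulr0 // -(ltn_add2l (mdeg k.1)) (leq_trans hm) ?leq_add2r.
Qed.

Lemma ord_geX k P : ord_ge 1 P -> ord_ge k (P ^+ k).
Proof.
move=> hP; elim: k => [|k ih]; first exact: ord_ge0.
by rewrite exprS -add1n; apply: ord_geM.
Qed.

Lemma ord_ge_Xn (i : 'I_n) q w : (w <= q)%N -> ord_ge w ('X_i ^+ q).
Proof.
move=> le_wq m hm; rewrite mpolyXn mcoeffX; case: eqP => // e.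
by move: hm; rewrite -e mdegMn mdeg1 mul1n ltnNge le_wq.
Qed.

Lemma ord_ge1_X (i : 'I_n) : ord_ge 1 'X_i.
Proof. by rewrite -[X in ord_ge _ X]expr1; apply: ord_ge_Xn. Qed.

Definition eq_below w P Q := ord_ge w (P - Q).

Lemma eq_below_refl w P : eq_below w P P.
Proof. by rewrite /eq_below subrr; apply: ord_ge_zero. Qed.

Lemma eq_below_sym w P Q : eq_below w P Q -> eq_below w Q P.
Proof. by rewrite /eq_below -opprB => /ord_geN; rewrite opprK. Qed.

Lemma eq_below_trans w P Q R : eq_below w P Q -> eq_below w Q R -> eq_below w P R.
Proof. by move=> hPQ hQR; have := ord_geD hPQ hQR; rewrite addrA subrK. Qed.

Lemma eq_belowD w P P' Q Q' :
  eq_below w P P' -> eq_below w Q Q' -> eq_below w (P + Q) (P' + Q').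
Proof. by move=> hP hQ; have := ord_geD hP hQ; rewrite /eq_below opprD addrACA. Qed.

Lemma eq_belowZ w c P P' : eq_below w P P' -> eq_below w (c *: P) (c *: P').
Proof. by move=> hP; rewrite /eq_below -scalerBr; apply: ord_geZ. Qed.

Lemma eq_belowM w P P' Q Q' :
  eq_below w P P' -> eq_below w Q Q' -> eq_below w (P * Q) (P' * Q').
Proof.
move=> hP hQ; rewrite /eq_below.
have -> : P * Q - P' * Q' = P * (Q - Q') + (P - P') * Q'.
  by rewrite mulrBr mulrBl addrA subrK.
by apply: ord_geD; [rewrite -(add0n w) | rewrite -(addn0 w)];
  apply: ord_geM => //; apply: ord_ge0.
Qed.

Lemma eq_belowX w k P P' : eq_below w P P' -> eq_below w (P ^+ k) (P' ^+ k).
Proof.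
move=> hP; elim: k => [|k ih]; first exact: eq_below_refl.
by rewrite !exprS; apply: eq_belowM.
Qed.

Lemma eq_below_sum w (I : Type) (r : seq I) (Pr : pred I) (F F' : I -> {mpoly rat[n]}) :
  (forall i, Pr i -> eq_below w (F i) (F' i)) ->
  eq_below w (\sum_(i <- r | Pr i) F i) (\sum_(i <- r | Pr i) F' i).
Proof.
move=> hF; elim/big_rec2: _ => [|i a b Pi ih]; first exact: eq_below_refl.
by apply: eq_belowD => //; apply: hF.
Qed.

Lemma eq_below_coef w P Q m : eq_below w P Q -> (mdeg m < w)%N -> P@_m = Q@_m.
Proof. by move=> hPQ hm; apply/eqP; rewrite -subr_eq0 -mcoeffB hPQ. Qed.

Lemma eq_below_expn d q P Q : ord_ge 1 P -> ord_ge 1 Q ->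
  eq_below d P Q -> eq_below (d + q.-1) (P ^+ q) (Q ^+ q).
Proof.
move=> hP hQ hPQ; rewrite /eq_below subrXX; apply: ord_geM => //.
apply: ord_ge_sum => i _.
have le_iq : (i <= q.-1)%N by rewrite -ltnS (leq_trans (ltn_ord i)) ?leqSpred.
by rewrite -{1}(subnK le_iq); apply: ord_geM; apply: ord_geX.
Qed.

End LowDegree.

Section Composition.
Variables n k : nat.

Lemma ord_ge_comp w (P : {mpoly rat[n]}) (Q : n.-tuple {mpoly rat[k]}) :
  ord_ge w P -> (forall i, ord_ge 1 (tnth Q i)) -> ord_ge w (P \mPo Q).
Proof.
move=> hP hQ; rewrite comp_mpolyE big_seq; apply: ord_ge_sum => m hm.
case: (ltnP (mdeg m) w) => hw.
  by move: hm; rewrite mcoeff_msupp hP // eqxx.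
apply: ord_geZ; apply: ord_ge_le hw _; rewrite mdegE.
elim/big_rec2: _ => [|i a R _ ih]; first exact: ord_ge0.
by apply: ord_geM => //; apply: ord_geX.
Qed.

Lemma eq_below_comp w (P P' : {mpoly rat[n]}) (Q Q' : n.-tuple {mpoly rat[k]}) :
  eq_below w P P' -> (forall i, eq_below w (tnth Q i) (tnth Q' i)) ->
  (forall i, ord_ge 1 (tnth Q i)) -> eq_below w (P \mPo Q) (P' \mPo Q').
Proof.
move=> hP hQ hQ1; apply: (@eq_below_trans _ _ _ (P' \mPo Q)).
  by rewrite /eq_below -comp_mpolyB; apply: ord_ge_comp.
rewrite !comp_mpolyE; apply: eq_below_sum => m _; apply: eq_belowZ.
elim/big_rec2: _ => [|i a b _ ih]; first exact: eq_below_refl.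
by apply: eq_belowM => //; apply: eq_belowX.
Qed.

Lemma comp_mpolyA l (P : {mpoly rat[n]}) (Q : 'I_n -> {mpoly rat[k]})
    (R : k.-tuple {mpoly rat[l]}) :
  (P \mPo [tuple Q i | i < n]) \mPo R = P \mPo [tuple Q i \mPo R | i < n].
Proof.
rewrite [P \mPo [tuple Q i | i < n]]comp_mpolyE [P \mPo _]comp_mpolyE raddf_sum.
apply: eq_bigr => m _; rewrite /= linearZ /= rmorph_prod; congr (_ *: _).
by apply: eq_bigr => i _; rewrite rmorphXn !tnth_mktuple.
Qed.

End Composition.

Section Agreement.
Variable n : nat.
Implicit Types (f g : ser n) (P Q : {mpoly rat[n]}).

Definition agree w f P := forall m, (mdeg m < w)%N -> f m = P@_m.

Lemma agree_trunc d f : agree d.+1 f (trunc d f).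
Proof. by move=> m hm; rewrite mcoeff_trunc -ltnS hm. Qed.

Lemma agree_le v w f P : (v <= w)%N -> agree w f P -> agree v f P.
Proof. by move=> le_vw hf m hm; apply: hf; apply: leq_trans le_vw. Qed.

Lemma agree_eq_below w f P Q : agree w f P -> agree w f Q -> eq_below w P Q.
Proof. by move=> hP hQ m hm; rewrite mcoeffB -hP // -hQ // subrr. Qed.

Lemma agree_smon w m0 : agree w (smon m0) 'X_[m0].
Proof. by move=> m _; rewrite /smon mcoeffX eq_sym. Qed.

Lemma agree_svar w i : agree w (svar i) 'X_i.
Proof. exact: agree_smon. Qed.

Lemma agree_sadd w f g P Q : agree w f P -> agree w g Q -> agree w (sadd f g) (P + Q).
Proof. by move=> hf hg m hm; rewrite /sadd mcoeffD hf ?hg. Qed.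

Lemma agree_coef0 w f P : (0 < w)%N -> ord_ge 1 P -> agree w f P -> f 0%MM = 0.
Proof. by move=> w_gt0 hP hf; rewrite hf ?mdeg0 // hP // mdeg0. Qed.

Lemma svar_coef0 (i : 'I_n) : svar i 0%MM = 0.
Proof. exact: agree_coef0 (ltn0Sn 0) (ord_ge1_X i) (agree_svar (w := 1) i). Qed.

Lemma trunc_ord_ge1 d f : f 0%MM = 0 -> ord_ge 1 (trunc d f).
Proof. by move=> f0 m /mdeg_lt1 ->; rewrite mcoeff_trunc f0; case: ifP. Qed.

End Agreement.

Lemma agree_scomp n k w (f : ser n) (g : 'I_n -> ser k) P (Q : n.-tuple {mpoly rat[k]}) :
  agree w f P -> (forall i, agree w (g i) (tnth Q i)) -> (forall i, g i 0%MM = 0) ->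
  agree w (scomp f g) (P \mPo Q).
Proof.
move=> hf hg g0 m hm; rewrite /scomp; apply: (@eq_below_coef _ (mdeg m).+1) => //.
apply: eq_below_comp => [|i|i]; rewrite ?tnth_mktuple.
- exact: agree_eq_below (agree_trunc f) (agree_le hm hf).
- exact: agree_eq_below (agree_trunc (g i)) (agree_le hm (hg i)).
- exact: trunc_ord_ge1.
Qed.

Section PIntegral.
Variable p : nat.
Hypothesis p_prime : prime p.

Lemma pnatr_neq0 : (p%:R : rat) != 0.
Proof. by rewrite pnatr_eq0 -lt0n prime_gt0. Qed.

Lemma expn_prime_gt1 e : (0 < e)%N -> (1 < p ^ e)%N.
Proof. by move=> e_gt0; apply: leq_ltn_trans e_gt0 (ltn_expl e (prime_gt1 p_prime)). Qed.

Lemma pintP r :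
  reflect (exists a : int, exists2 b : nat, ~~ (p %| b)%N & r * b%:R = a%:~R) (pint p r).
Proof.
apply: (iffP idP) => [pr|[a [b pb e]]].
  by exists (numq r), `|denq r|%N => //; rewrite numqE -absz_denq pmulrn.
apply: contra pb => /dvdn_trans; apply.
have e_int : (numq r * b%:Z = a * denq r)%R.
  by apply: (@intr_inj rat); rewrite !intrM numqE -e /= mulrAC.
have := congr1 absz e_int; rewrite !abszM /= => e_nat.
by rewrite -(@Gauss_dvdr _ `|numq r|) ?e_nat ?dvdn_mull // coprime_sym coprime_num_den.
Qed.

Lemma pint_int (a : int) : pint p a%:~R.
Proof. by apply/pintP; exists a, 1%N; rewrite ?mulr1 // dvdn1 gtn_eqF ?prime_gt1. Qed.

Lemma pint_nat (a : nat) : pint p a%:R.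
Proof. exact: (pint_int a). Qed.

Lemma pintD r s : pint p r -> pint p s -> pint p (r + s).
Proof.
move=> /pintP [a1 [b1 h1 e1]] /pintP [a2 [b2 h2 e2]].
apply/pintP; exists (a1 * b2%:Z + a2 * b1%:Z), (b1 * b2)%N.
  by rewrite Euclid_dvdM // negb_or h1 h2.
by rewrite natrM mulrDl intrD !intrM -e1 -e2 /=; ring.
Qed.

Lemma pintM r s : pint p r -> pint p s -> pint p (r * s).
Proof.
move=> /pintP [a1 [b1 h1 e1]] /pintP [a2 [b2 h2 e2]].
apply/pintP; exists (a1 * a2), (b1 * b2)%N.
  by rewrite Euclid_dvdM // negb_or h1 h2.
by rewrite natrM intrM -e1 -e2; ring.
Qed.

Lemma pintN r : pint p r -> pint p (- r).
Proof. by move=> pr; rewrite -mulN1r; apply: pintM => //; apply: (pint_int (-1)). Qed.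

Lemma pint_sum (I : Type) (r : seq I) (P : pred I) (F : I -> rat) :
  (forall i, P i -> pint p (F i)) -> pint p (\sum_(i <- r | P i) F i).
Proof. by move=> hF; elim/big_ind: _ => //; [exact: (pint_nat 0) | exact: pintD]. Qed.

Lemma congp_pint r s : congp p r s -> pint p s -> pint p r.
Proof.
move=> rs ps; have -> : r = s + p%:R * ((r - s) / p%:R).
  by rewrite mulrC divfK ?pnatr_neq0 // addrC subrK.
by apply: pintD => //; apply: pintM => //; apply: pint_nat.
Qed.

Variable n : nat.
Implicit Types P Q : {mpoly rat[n]}.

Definition mpint P := forall m, pint p P@_m.

Lemma mpintD P Q : mpint P -> mpint Q -> mpint (P + Q).
Proof. by move=> hP hQ m; rewrite mcoeffD pintD. Qed.

Lemma mpintZ c P : pint p c -> mpint P -> mpint (c *: P).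
Proof. by move=> hc hP m; rewrite mcoeffZ pintM. Qed.

Lemma mpintM P Q : mpint P -> mpint Q -> mpint (P * Q).
Proof. by move=> hP hQ m; rewrite mcoeffM; apply: pint_sum => k _; apply: pintM. Qed.

Lemma mpintX P k : mpint P -> mpint (P ^+ k).
Proof.
move=> hP; elim: k => [|k ih]; last by rewrite exprS; apply: mpintM.
by move=> m; rewrite mcoeff1 pint_nat.
Qed.

Lemma mpint_sum (I : Type) (r : seq I) (Pr : pred I) (F : I -> {mpoly rat[n]}) :
  (forall i, Pr i -> mpint (F i)) -> mpint (\sum_(i <- r | Pr i) F i).
Proof.
move=> hF; elim/big_ind: _ => //; last exact: mpintD.
by move=> m; rewrite mcoeff0 (pint_nat 0).
Qed.

Lemma mpint_X (i : 'I_n) : mpint 'X_i.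
Proof. by move=> m; rewrite mcoeffX pint_nat. Qed.

(* [(X + p^k Y)^p - X^p = sum_{i>=1} C(p,i) p^(k i) X^(p-i) Y^i], and [p^(k+1)] divides
   [C(p,i) p^(k i)]: through [C(p,1) = p] for [i = 1], through [k i >= k + 1] otherwise. *)
Lemma expn_prime_cong k X Y : (0 < k)%N -> mpint X -> mpint Y ->
  exists2 Z, mpint Z & (X + (p ^ k)%:R *: Y) ^+ p = X ^+ p + (p ^ k.+1)%:R *: Z.
Proof.
move=> k_gt0 hX hY.
exists (\sum_(i < p) ((('C(p, i.+1) * p ^ (k * i.+1)) %/ p ^ k.+1)%:R : rat) *:
          (X ^+ (p - i.+1) * Y ^+ i.+1)).
  by apply: mpint_sum => i _; apply: mpintZ; [exact: pint_nat | apply: mpintM; exact: mpintX].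
rewrite exprDn big_ord_recl /= subn0 expr0 mulr1 bin0 mulr1n; congr (_ + _).
rewrite scaler_sumr; apply: eq_bigr => i _.
rewrite /bump /= add1n exprZn -scalerAr -scaler_nat !scalerA -natrX -!natrM.
congr (_ *: _); congr (_%:R); rewrite -expnM [RHS]mulnC divnK //.
case: i => [[|i] hi] /=; first by rewrite bin1 muln1 expnS.
apply: dvdn_mull; rewrite dvdn_Pexp2l ?prime_gt1 //; nia.
Qed.

Lemma expn_pow_cong e B C : mpint B -> mpint C ->
  exists2 D, mpint D & (B + p%:R *: C) ^+ (p ^ e) = B ^+ (p ^ e) + (p ^ e.+1)%:R *: D.
Proof.
move=> hB hC; elim: e => [|e [D hD eD]]; first by exists C; rewrite ?expn0 ?expr1.
have [Z hZ eZ] := expn_prime_cong (ltn0Sn e) (mpintX (p ^ e) hB) hD.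
by exists Z => //; rewrite (expnSr p e) !exprM eD eZ.
Qed.

(* Below [mdeg m], [G] is [F] plus [p] times an integral polynomial, and the
   coefficient at [m] of a [p ^ e]-th power only sees the factors below [mdeg m]. *)
Lemma pint_coef_expn_sub e (F G : {mpoly rat[n]}) m :
  (0 < e)%N -> ord_ge 1 F -> ord_ge 1 G -> mpint F ->
  (forall m', (mdeg m' < mdeg m)%N -> congp p G@_m' F@_m') ->
  pint p ((F ^+ (p ^ e) - G ^+ (p ^ e))@_m / (p ^ e.+1)%:R).
Proof.
move=> e_gt0 hF hG iF congGF; set d := mdeg m.
set A := low_part d (fun m' => G@_m'); set B := low_part d (fun m' => F@_m').
have low_eq (P : {mpoly rat[n]}) : ord_ge 1 P ->
    (P ^+ (p ^ e))@_m = (low_part d (fun m' => P@_m') ^+ (p ^ e))@_m.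
  move=> hP; apply: (@eq_below_coef _ (d + (p ^ e).-1)).
    apply: eq_below_expn => // [m' /mdeg_lt1 ->|m' hm'].
      by rewrite mcoeff_low_part; case: ifP => // _; apply: hP; rewrite mdeg0.
    by rewrite mcoeffB mcoeff_low_part hm' /= subrr.
  by rewrite -[X in (X < _)%N]addn0 ltn_add2l -subn1 subn_gt0 expn_prime_gt1.
have iB : mpint B.
  by move=> m'; rewrite mcoeff_low_part; case: ifP => _; [exact: iF | exact: (pint_nat 0)].
have iC : mpint ((p%:R)^-1 *: (A - B)).
  move=> m'; rewrite mcoeffZ mcoeffB !mcoeff_low_part mulrC.
  by case: ifP => [/congGF //|_]; rewrite subrr mul0r (pint_nat 0).
have [D iD eD] := expn_pow_cong e iB iC.
rewrite scalerA mulfV ?pnatr_neq0 // scale1r addrC subrK in eD.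
rewrite mcoeffB (low_eq F hF) (low_eq G hG) -/A -/B eD mcoeffD mcoeffZ opprD addrA subrr add0r.
rewrite mulNr mulrAC mulfV ?mul1r ?pintN //.
by rewrite natrX expf_neq0 ?pnatr_neq0.
Qed.

Lemma congp_coef_ind (I : Type) w (A B C R : I -> {mpoly rat[n]}) :
  (forall i, mpint (C i)) -> (forall i, eq_below w (A i - B i) (p%:R *: C i + R i)) ->
  (forall i m, (mdeg m < w)%N ->
     (forall i' m', (mdeg m' < mdeg m)%N -> congp p (A i')@_m' (B i')@_m') ->
     pint p ((R i)@_m / p%:R)) ->
  forall i m, (mdeg m < w)%N -> congp p (A i)@_m (B i)@_m.
Proof.
move=> iC eqAB hR.
suff ind d : forall i m, mdeg m = d -> (mdeg m < w)%N -> congp p (A i)@_m (B i)@_m.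
  by move=> i m; apply: ind.
elim/ltn_ind: d => d IH i m dm hm.
rewrite /congp -mcoeffB (eq_below_coef (eqAB i) hm) mcoeffD mcoeffZ mulrDl.
apply: pintD; first by rewrite mulrC mulKf ?pnatr_neq0 //; apply: iC.
apply: hR => // i' m' lt_m'm; apply: IH (erefl _) _; first by rewrite -dm.
exact: ltn_trans lt_m'm hm.
Qed.

End PIntegral.

Lemma ord2_cases (j : 'I_2) : j = i1 \/ j = i2.
Proof. by case: j => [[|[|k]] hk]; [left; apply: val_inj | right; apply: val_inj | ]. Qed.

Section Logarithm.
Variables p h1 h2 : nat.
Hypotheses (p_prime : prime p) (h1_gt0 : (0 < h1)%N) (h2_gt0 : (0 < h2)%N).
Local Notation h := (h1 + h2)%N.

Definition Ltail n N (a b : 'I_2) hi (Q : 'I_2 -> {mpoly rat[n]}) : {mpoly rat[n]} :=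
  \sum_(1 <= k < N) ((p%:R : rat) ^- (2 * k)) *: Q a ^+ (p ^ (k * h))
  + \sum_(0 <= k < N) ((p%:R : rat) ^- (2 * k).+1) *: Q b ^+ (p ^ (hi + k * h)).

Lemma Lpart_comp n N a b hi (Q : 'I_2 -> {mpoly rat[n]}) :
  Lpart p h1 h2 N a b hi \mPo [tuple Q i | i < 2] = Q a + Ltail N a b hi Q.
Proof.
rewrite /Lpart /Ltail !comp_mpolyD !raddf_sum /= comp_mpolyXU -tnth_nth tnth_mktuple addrA.
by congr (_ + _ + _); apply: eq_bigr => k _;
  rewrite comp_mpolyZ rmorphXn /= comp_mpolyXU -tnth_nth tnth_mktuple.
Qed.

Lemma ltn_expn_Ltail k hi : (k < p ^ (hi + k * h))%N.
Proof.
apply: leq_trans (ltn_expl k (prime_gt1 p_prime)) _.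
by rewrite leq_pexp2l ?prime_gt0 //; nia.
Qed.

Lemma ord_ge_sum_from N N' (x : 'I_2) (c : nat -> rat) (e : nat -> nat) :
  (forall k, (k < p ^ e k)%N) ->
  ord_ge N (\sum_(N <= k < N') c k *: ('X_x : {mpoly rat[2]}) ^+ (p ^ e k)).
Proof.
move=> he; rewrite big_nat_cond; apply: ord_ge_sum => k /andP[/andP[le_Nk _] _].
by apply: ord_geZ; apply: ord_ge_Xn; apply: leq_trans le_Nk (ltnW (he k)).
Qed.

Lemma Lpart_coef_stable N N' a b hi m : (mdeg m < N)%N -> (N <= N')%N ->
  (Lpart p h1 h2 N a b hi)@_m = (Lpart p h1 h2 N' a b hi)@_m.
Proof.
move=> hm le_NN'; have N_gt0 : (0 < N)%N := leq_ltn_trans (leq0n _) hm.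
rewrite /Lpart (big_cat_nat N_gt0 le_NN') (big_cat_nat (leq0n N) le_NN') /=.
have tail_a k : (k < p ^ (k * h))%N := ltn_expn_Ltail k 0.
rewrite !mcoeffD (ord_ge_sum_from _ _ _ tail_a hm).
by rewrite (ord_ge_sum_from _ _ _ (fun k => ltn_expn_Ltail k hi) hm) !addr0.
Qed.

Definition Lpoly N (j : 'I_2) : {mpoly rat[2]} :=
  if j == i1 then Lpart p h1 h2 N i1 i2 h1 else Lpart p h1 h2 N i2 i1 h2.

Definition Ltail_at n N (j : 'I_2) (Q : 'I_2 -> {mpoly rat[n]}) : {mpoly rat[n]} :=
  if j == i1 then Ltail N i1 i2 h1 Q else Ltail N i2 i1 h2 Q.

Lemma Lpoly_comp n N j (Q : 'I_2 -> {mpoly rat[n]}) :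
  Lpoly N j \mPo [tuple Q i | i < 2] = Q j + Ltail_at N j Q.
Proof. by case: (ord2_cases j) => ->; rewrite /Lpoly /Ltail_at /= Lpart_comp. Qed.

Lemma Lpoly_X N j : Lpoly N j = 'X_j + Ltail_at N j (fun i => 'X_i).
Proof. by rewrite -[LHS]comp_mpoly_id Lpoly_comp. Qed.

Lemma ord_ge2_Ltail_at_X N j : ord_ge 2 (Ltail_at N j (fun i => 'X_i : {mpoly rat[2]})).
Proof.
have tail_ge2 a b hi : (0 < hi)%N -> ord_ge 2 (Ltail N a b hi (fun i => 'X_i : {mpoly rat[2]})).
  move=> hi_gt0; apply: ord_geD; rewrite big_nat_cond;
    apply: ord_ge_sum => k /andP[/andP[k1 _] _];
    by apply: ord_geZ; apply: ord_ge_Xn; apply: (expn_prime_gt1 p_prime); nia.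
by rewrite /Ltail_at; case: ifP => _; apply: tail_ge2.
Qed.

Lemma Lpoly_eq_below2 N j : eq_below 2 (Lpoly N j) 'X_j.
Proof. by rewrite /eq_below Lpoly_X addrC addKr; apply: ord_ge2_Ltail_at_X. Qed.

Lemma Lpoly_ord_ge1 N j : ord_ge 1 (Lpoly N j).
Proof.
have := ord_geD (ord_ge_le (ltnW (ltnSn 1)) (Lpoly_eq_below2 N j)) (ord_ge1_X j).
by rewrite subrK.
Qed.

Lemma Lser_agree w j : agree w (Lser p h1 h2 j) (Lpoly w j).
Proof. by move=> m hm; rewrite /Lser /Lpoly; case: (j == i1); apply: Lpart_coef_stable. Qed.

Definition frob_poly (j : 'I_2) : {mpoly rat[2]} :=
  if j == i1 then 'X_i2 ^+ (p ^ h1) else 'X_i1 ^+ (p ^ h2).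

Lemma frob_sw_coef j m : frob_sw p h1 h2 j m = (frob_poly j)@_m.
Proof. by rewrite /frob_sw /frob_poly /smon; case: ifP => _; rewrite mcoeffXn eq_sym. Qed.

Lemma frob_poly_ord_ge1 j : ord_ge 1 (frob_poly j).
Proof. by rewrite /frob_poly; case: ifP => _; apply: ord_ge_Xn; rewrite expn_gt0 prime_gt0. Qed.

Lemma mpint_frob_poly j : mpint p (frob_poly j).
Proof. by rewrite /frob_poly; case: ifP => _; apply: (mpintX p_prime); apply: mpint_X. Qed.

(* Functional equation of the logarithm: [p] times a term of the tail is [Ph a] or a
   term of the tail at the Frobenius twist [Ph]; only the top term at [Ph] is left over,
   and its degree exceeds [N]. *)
Lemma Ltail_frob N (a b : 'I_2) hi hj (Ph : 'I_2 -> {mpoly rat[2]}) :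
  (hj + hi = h)%N -> Ph a = 'X_b ^+ (p ^ hi) -> Ph b = 'X_a ^+ (p ^ hj) ->
  eq_below N.+1 (p%:R *: Ltail N.+1 a b hi (fun i => 'X_i)) (Ph a + Ltail N.+1 a b hi Ph).
Proof.
move=> hh Pa Pb.
have pinvS k : (p%:R : rat) * p%:R ^- k.+1 = p%:R ^- k.
  by rewrite exprS invfM mulrA mulfV ?mul1r ?pnatr_neq0.
suff E : p%:R *: Ltail N.+1 a b hi (fun i => 'X_i)
    + (p%:R ^- (2 * N).+1) *: 'X_a ^+ (p ^ (N.+1 * h)) = Ph a + Ltail N.+1 a b hi Ph.
  rewrite /eq_below -E opprD addrA subrr add0r; apply: ord_geN; apply: ord_geZ.
  exact/ord_ge_Xn/ltnW/(ltn_expn_Ltail N.+1 0).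
rewrite /Ltail Pa Pb scalerDr !scaler_sumr.
rewrite !big_add1 /= big_nat_recl // [X in _ = _ + (_ + X)]big_nat_recr //=.
have e1 : \sum_(0 <= k < N)
      (p%:R : rat) *: (p%:R ^- (2 * k.+1) *: ('X_a : {mpoly rat[2]}) ^+ (p ^ (k.+1 * h)))
    = \sum_(0 <= k < N) (p%:R ^- (2 * k).+1 *: ('X_a ^+ (p ^ hj)) ^+ (p ^ (hi + k * h))).
  apply: eq_bigr => k _; rewrite scalerA -exprM -expnD mulnS pinvS.
  by rewrite mulSn -hh addnA.
have e2 : \sum_(0 <= k < N)
      (p%:R : rat) *: (p%:R ^- (2 * k.+1).+1 *: ('X_b : {mpoly rat[2]}) ^+ (p ^ (hi + k.+1 * h)))
    = \sum_(0 <= k < N) (p%:R ^- (2 * k.+1) *: ('X_b ^+ (p ^ hi)) ^+ (p ^ (k.+1 * h))).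
  by apply: eq_bigr => k _; rewrite scalerA -exprM -expnD pinvS.
have e3 : (p%:R : rat) *: (p%:R ^- (2 * 0).+1 *: ('X_b : {mpoly rat[2]}) ^+ (p ^ (hi + 0 * h)))
    = 'X_b ^+ (p ^ hi).
  by rewrite scalerA muln0 expr1 mulfV ?pnatr_neq0 // scale1r mul0n addn0.
have e4 : ((p%:R : rat) ^- (2 * N).+1) *: ('X_a : {mpoly rat[2]}) ^+ (p ^ (N.+1 * h))
    = p%:R ^- (2 * N).+1 *: ('X_a ^+ (p ^ hj)) ^+ (p ^ (hi + N * h)).
  by rewrite -exprM -expnD mulSn -hh addnA.
by rewrite e1 e2 e3 e4; ring.
Qed.

Lemma Ltail_at_frob w j :
  eq_below w (p%:R *: Ltail_at w j (fun i => 'X_i)) (frob_poly j + Ltail_at w j frob_poly).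
Proof.
case: w => [|N]; first exact: ord_ge0.
case: (ord2_cases j) => ->; rewrite /Ltail_at /=.
  by apply: (Ltail_frob (hj := h2)); rewrite // addnC.
exact: (Ltail_frob (hj := h1)).
Qed.

Lemma Ltail_diff_coef N a b hi (A B : 'I_2 -> {mpoly rat[2]}) m : (0 < hi)%N ->
  (forall i, ord_ge 1 (A i)) -> (forall i, ord_ge 1 (B i)) -> (forall i, mpint p (B i)) ->
  (forall i m', (mdeg m' < mdeg m)%N -> congp p (A i)@_m' (B i)@_m') ->
  pint p ((Ltail N a b hi B - Ltail N a b hi A)@_m / p%:R).
Proof.
move=> hi_gt0 hA hB iB congAB.
have term j e x : (j <= e)%N -> (0 < e)%N ->
    pint p (((p%:R : rat) ^- j *: (B x ^+ (p ^ e) - A x ^+ (p ^ e)))@_m / p%:R).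
  move=> le_je e_gt0; rewrite mcoeffZ.
  have -> c : p%:R ^- j * c / p%:R = (p ^ (e - j))%:R * (c / (p ^ e.+1)%:R) :> rat.
    rewrite -(subnK le_je) addnK !natrX exprSr exprD.
    by field; rewrite ?expf_neq0 ?pnatr_neq0.
  apply: (pintM p_prime); first exact: (pint_nat p_prime).
  exact: (pint_coef_expn_sub p_prime e_gt0 (hB x) (hA x) (iB x) (congAB x)).
rewrite /Ltail opprD addrACA -!sumrB mcoeffD mulrDl; apply: (pintD p_prime).
all: rewrite big_nat_cond raddf_sum mulr_suml.
all: apply: (pint_sum p_prime) => k /andP[/andP[k1 _] _].
all: by rewrite -scalerBr; apply: term; nia.
Qed.

Lemma Ltail_at_diff_coef N j (A B : 'I_2 -> {mpoly rat[2]}) m :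
  (forall i, ord_ge 1 (A i)) -> (forall i, ord_ge 1 (B i)) -> (forall i, mpint p (B i)) ->
  (forall i m', (mdeg m' < mdeg m)%N -> congp p (A i)@_m' (B i)@_m') ->
  pint p ((Ltail_at N j B - Ltail_at N j A)@_m / p%:R).
Proof. by move=> *; rewrite /Ltail_at; case: ifP => _; apply: Ltail_diff_coef. Qed.

End Logarithm.

Definition pair_tuple n (U V : 'I_2 -> {mpoly rat[n]}) : (2 + 2).-tuple {mpoly rat[n]} :=
  [tuple match split t with inl a => U a | inr b => V b end | t < 2 + 2].

Lemma pair_tuple_ord_ge1 n (U V : 'I_2 -> {mpoly rat[n]}) :
  (forall i, ord_ge 1 (U i)) -> (forall i, ord_ge 1 (V i)) ->
  forall t, ord_ge 1 (tnth (pair_tuple U V) t).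
Proof. by move=> hU hV t; rewrite tnth_mktuple; case: split. Qed.

Fixpoint mulFpoly (Fq : 'I_2 -> {mpoly rat[4]}) k : 'I_2 -> {mpoly rat[2]} :=
  match k with
  | 0 => fun _ => 0
  | k'.+1 =>
    if k' is 0 then fun i => 'X_i
    else fun i => Fq i \mPo pair_tuple (fun a => 'X_a) (mulFpoly Fq k')
  end.

Lemma mulFpolySS Fq k :
  mulFpoly Fq k.+2 = fun i => Fq i \mPo pair_tuple (fun a => 'X_a) (mulFpoly Fq k.+1).
Proof. by []. Qed.

Lemma mulFSS F k : mulF F k.+2 = fun i => scomp (F i) (fun t : 'I_(2 + 2) =>
  match split t with inl a => svar a | inr b => mulF F k.+1 b end).
Proof. by []. Qed.

Section FormalGroup.
Variables (p h1 h2 : nat) (G : 'I_2 -> ser 2) (w : nat).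
Hypotheses (p_prime : prime p) (h1_gt0 : (0 < h1)%N) (h2_gt0 : (0 < h2)%N).
Hypotheses (G_inv : is_Linv p h1 h2 G) (w_gt0 : (0 < w)%N).
Local Notation Lpoly := (Lpoly p h1 h2 w).

Definition Lsum j : {mpoly rat[4]} :=
  (Lpoly j \mPo [tuple 'X_(lshift 2 t) | t < 2])
  + (Lpoly j \mPo [tuple 'X_(rshift 2 t) | t < 2]).

Definition Fpoly i := trunc w (G i) \mPo [tuple Lsum j | j < 2].

Lemma G_coef0 i : G i 0%MM = 0.
Proof. by case: G_inv. Qed.

Lemma Lpoly_comp_Gtrunc i : eq_below w (Lpoly i \mPo [tuple trunc w (G j) | j < 2]) 'X_i.
Proof.
have hG j : agree w (G j) (tnth [tuple trunc w (G j) | j < 2] j).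
  by rewrite tnth_mktuple; apply: agree_le (leqnSn w) (agree_trunc _).
have := agree_scomp (Lser_agree p_prime h1_gt0 h2_gt0 i) hG G_coef0.
by case: G_inv => _ -> _ hL; apply: agree_eq_below hL (agree_svar i).
Qed.

Lemma Lsum_ord_ge1 j : ord_ge 1 (Lsum j).
Proof.
by apply: ord_geD; apply: ord_ge_comp (Lpoly_ord_ge1 p_prime h1_gt0 h2_gt0 w j) _ => t;
  rewrite tnth_mktuple; apply: ord_ge1_X.
Qed.

Lemma Lsum_comp_pair n (U V : 'I_2 -> {mpoly rat[n]}) j :
  Lsum j \mPo pair_tuple U V
  = (Lpoly j \mPo [tuple U i | i < 2]) + (Lpoly j \mPo [tuple V i | i < 2]).
Proof.
rewrite /Lsum comp_mpolyD !comp_mpolyA.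
by congr (_ + _); congr (_ \mPo _); apply: eq_mktuple => i;
  rewrite comp_mpolyXU -tnth_nth tnth_mktuple ?(unsplitK (inl _ i)) ?(unsplitK (inr _ i)).
Qed.

Lemma Fpoly_ord_ge1 i : ord_ge 1 (Fpoly i).
Proof.
apply: ord_ge_comp => [|j]; first exact/trunc_ord_ge1/G_coef0.
by rewrite tnth_mktuple; apply: Lsum_ord_ge1.
Qed.

Lemma agree_FLT i : agree w (FLT p h1 h2 G i) (Fpoly i).
Proof.
have agree_Lsum j : agree w (sadd (scomp (Lser p h1 h2 j) (fun t => svar (lshift 2 t)))
                                  (scomp (Lser p h1 h2 j) (fun t => svar (rshift 2 t)))) (Lsum j).
  by apply: agree_sadd; apply: agree_scomp (Lser_agree p_prime h1_gt0 h2_gt0 j) _ _ => t;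
    rewrite ?tnth_mktuple ?svar_coef0 //; apply: agree_svar.
apply: agree_scomp => [|j|j]; rewrite ?tnth_mktuple //.
- exact: agree_le (leqnSn w) (agree_trunc _).
- exact: agree_coef0 w_gt0 (Lsum_ord_ge1 j) (agree_Lsum j).
Qed.

Lemma mulFpoly_ord_ge1 k i : (0 < k)%N -> ord_ge 1 (mulFpoly Fpoly k i).
Proof.
elim: k i => [//|[|k] ih] i _; first exact: ord_ge1_X.
rewrite mulFpolySS; apply: ord_ge_comp (Fpoly_ord_ge1 i) _.
by apply: pair_tuple_ord_ge1 => j; [apply: ord_ge1_X | apply: ih].
Qed.

Lemma agree_mulF k i : (0 < k)%N -> agree w (mulF (FLT p h1 h2 G) k i) (mulFpoly Fpoly k i).
Proof.
elim: k i => [//|[|k] ih] i _; first exact: agree_svar.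
rewrite mulFSS mulFpolySS; apply: agree_scomp (agree_FLT i) _ _ => t;
  rewrite ?tnth_mktuple; case: split => [a|b].
- exact: agree_svar.
- exact: ih.
- exact: svar_coef0.
- exact: agree_coef0 w_gt0 (mulFpoly_ord_ge1 b (ltn0Sn k)) (ih b (ltn0Sn k)).
Qed.

Lemma Lpoly_comp_Fpoly i : eq_below w (Lpoly i \mPo [tuple Fpoly j | j < 2]) (Lsum i).
Proof.
rewrite /Fpoly -comp_mpolyA.
have -> : Lsum i = 'X_i \mPo [tuple Lsum j | j < 2].
  by rewrite comp_mpolyXU -tnth_nth tnth_mktuple.
apply: eq_below_comp => [|j|j]; rewrite ?tnth_mktuple.
- exact: Lpoly_comp_Gtrunc.
- exact: eq_below_refl.
- exact: Lsum_ord_ge1.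
Qed.

Lemma Lpoly_comp_Fpoly_pair n (U V : 'I_2 -> {mpoly rat[n]}) i :
  (forall j, ord_ge 1 (U j)) -> (forall j, ord_ge 1 (V j)) ->
  eq_below w (Lpoly i \mPo [tuple Fpoly j \mPo pair_tuple U V | j < 2])
             ((Lpoly i \mPo [tuple U j | j < 2]) + (Lpoly i \mPo [tuple V j | j < 2])).
Proof.
move=> hU hV; rewrite -comp_mpolyA -Lsum_comp_pair.
apply: eq_below_comp => [|t|]; first exact: Lpoly_comp_Fpoly.
  exact: eq_below_refl.
exact: pair_tuple_ord_ge1.
Qed.

Lemma Lpoly_mulFpoly k i : (0 < k)%N ->
  eq_below w (Lpoly i \mPo [tuple mulFpoly Fpoly k j | j < 2]) (k%:R *: Lpoly i).
Proof.
elim: k i => [//|[|k] ih] i _.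
  by rewrite comp_mpoly_id scale1r; apply: eq_below_refl.
have hM j : ord_ge 1 (mulFpoly Fpoly k.+1 j) by apply: mulFpoly_ord_ge1.
rewrite mulFpolySS; apply: eq_below_trans (Lpoly_comp_Fpoly_pair i (@ord_ge1_X 2) hM) _.
rewrite comp_mpoly_id -[k.+2]add1n natrD scalerDl scale1r.
by apply: eq_belowD; [apply: eq_below_refl | apply: ih].
Qed.

End FormalGroup.

Section MultiplicationByP.
Variables (p h1 h2 : nat) (G : 'I_2 -> ser 2).
Hypotheses (p_prime : prime p) (h1_gt0 : (0 < h1)%N) (h2_gt0 : (0 < h2)%N).
Hypothesis G_inv : is_Linv p h1 h2 G.

Local Notation pF := (mulF (FLT p h1 h2 G) p).
Local Notation mulp w := (mulFpoly (Fpoly p h1 h2 G w) p).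
Local Notation Lpoly := (Lpoly p h1 h2).
Local Notation frob_poly := (frob_poly p h1 h2).

Lemma agree_mulp w i : (0 < w)%N -> agree w (pF i) (mulp w i).
Proof. by move=> w_gt0; apply: agree_mulF => //; apply: prime_gt0. Qed.

Lemma mulp_ord_ge1 w i : ord_ge 1 (mulp w i).
Proof. by apply: mulFpoly_ord_ge1 => //; apply: prime_gt0. Qed.

Lemma Lpoly_mulp w i : (0 < w)%N ->
  eq_below w (Lpoly w i \mPo [tuple mulp w j | j < 2]) (p%:R *: Lpoly w i).
Proof. by move=> w_gt0; apply: Lpoly_mulFpoly => //; apply: prime_gt0. Qed.

Lemma mulF_lin_p : lin_p p pF.
Proof.
move=> i m hm; have w_gt0 : (0 < 2)%N by [].
have lin : eq_below 2 (mulp 2 i) (p%:R *: 'X_i).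
  have -> : mulp 2 i = 'X_i \mPo [tuple mulp 2 j | j < 2].
    by rewrite comp_mpolyXU -tnth_nth tnth_mktuple.
  apply: (@eq_below_trans _ _ _ (Lpoly 2 i \mPo [tuple mulp 2 j | j < 2])).
    apply: eq_below_comp => [|j|j]; rewrite ?tnth_mktuple.
    - by apply: eq_below_sym; apply: Lpoly_eq_below2.
    - exact: eq_below_refl.
    - exact: mulp_ord_ge1.
  apply: eq_below_trans (Lpoly_mulp i w_gt0) _.
  by apply: eq_belowZ; apply: Lpoly_eq_below2.
by rewrite (agree_mulp i w_gt0 hm) (eq_below_coef lin hm) mcoeffZ /smon mcoeffX eq_sym.
Qed.

Lemma mulp_sub_frob w j : (0 < w)%N ->
  eq_below w (mulp w j - frob_poly j)
    (p%:R *: 'X_j + (Ltail_at p h1 h2 w j frob_poly - Ltail_at p h1 h2 w j (mulp w))).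
Proof.
move=> w_gt0; have hL := Lpoly_mulp j w_gt0.
rewrite Lpoly_comp Lpoly_X scalerDr in hL.
have hT := Ltail_at_frob p_prime h1_gt0 h2_gt0 (w := w) j.
move: hL hT; rewrite /eq_below.
set A := mulp w j; set TA := Ltail_at _ _ _ _ j (mulp w).
set TX := Ltail_at _ _ _ _ j (fun i => 'X_i); set TPh := Ltail_at _ _ _ _ j frob_poly.
move=> hL hT; have -> : A - frob_poly j - (p%:R *: 'X_j + (TPh - TA))
    = (A + TA - (p%:R *: 'X_j + p%:R *: TX)) + (p%:R *: TX - (frob_poly j + TPh)) by ring.
exact: ord_geD.
Qed.

Lemma mulF_congp_frob : ser_congp p pF (frob_sw p h1 h2).
Proof.
move=> i m; have w_gt0 := ltn0Sn (mdeg m).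
rewrite (agree_mulp i w_gt0 (ltnSn _)) frob_sw_coef.
apply: (congp_coef_ind p_prime (C := fun j => 'X_j) _ (fun j => mulp_sub_frob j w_gt0))
  (ltnSn _) => [j|j m' _ IH]; first exact: mpint_X.
apply: Ltail_at_diff_coef IH => // j'; first exact: mulp_ord_ge1.
  exact: frob_poly_ord_ge1.
exact: mpint_frob_poly.
Qed.

End MultiplicationByP.

Theorem proposition3p6 (p h1 h2 : nat) (G : 'I_2 -> ser 2) :
  prime p -> (0 < h1)%N -> (0 < h2)%N -> coprime h1 h2 ->
  is_Linv p h1 h2 G ->
  let pF := mulF (FLT p h1 h2 G) p in
  [/\ lin_p p pF,
      ser_congp p pF (frob_sw p h1 h2)
    & CLT p h1 h2 pF].
Proof.
move=> p_prime h1_gt0 h2_gt0 _ G_inv pF.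
have lin := mulF_lin_p p_prime h1_gt0 h2_gt0 G_inv.
have cong := mulF_congp_frob p_prime h1_gt0 h2_gt0 G_inv.
split=> //; split=> //; last by right.
move=> i m; apply: (congp_pint p_prime (cong i m)).
by rewrite frob_sw_coef; apply: mpint_frob_poly.
Qed.
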